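(* Let $\beta\in(0,1)$, $z>0$, $c>0$, and let $N$ be a positive integer. Let $F$ be a continuous cumulative distribution function with support $[\underline{w},\overline{w}]$, $\underline{w}<\overline{w}$, and mean $\mu_w$. Assume $\underline{w}<(1-\beta)z+\beta\mu_w$ and $z+c<\overline{w}$. For $x\in[\underline{w},\overline{w}]$ put $$\Upsilon(x)=\int_{\underline{w}}^{x}x\,dF(w)+\int_{x}^{\overline{w}}w\,dF(w).$$ Then the equation $x=z(1-\beta)+\beta\,\Upsilon(x)$ has exactly one solution $x\in[\underline{w},\overline{w}]$; call it $w_R(0)$. Defining recursively $w_R(n)=(z+c)(1-\beta)+\beta\,\Upsilon(w_R(n-1))$ for $n=1,\dots,N$, we have $$\overline{w}>w_R(N)>\cdots>w_R(n+1)>w_R(n)>\cdots>w_R(0)>\underline{w}.$$ Moreover, the same conclusions hold when the support of $F$ is $[\underline{w},\infty)$ (with $F$ continuous with finite mean $\mu_w$, $\underline{w}<(1-\beta)z+\beta\mu_w$, $\Upsilon(x)=\int_{\underline{w}}^{x}x\,dF(w)+\int_x^\infty w\,dF(w)$): the equation $x=z(1-\beta)+\beta\Upsilon(x)$ has a unique solution $w_R(0)\in[\underline{w},\infty)$ and $\underline{w}<w_R(0)<w_R(1)<\cdots<w_R(N)<\infty$.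
   Context: Interpretation (the paper's model): a risk-neutral, infinitely lived worker maximizes $\mathrm{E}_0\sum_{t\ge0}\beta^t x_t$, where $x_t$ is income. While unemployed, the worker draws one i.i.d. wage offer per period from $F$; an accepted job paying $w$ is kept forever (value $W(w)=w/(1-\beta)$). While unemployed with $n\ge1$ remaining periods of unemployment-insurance benefits, flow income is $z+c$ ($z$ = value of nonwork, $c$ = benefit) and the state moves to $n-1$ after a rejection; with $n=0$ remaining periods flow income is $z$ and the state stays at $0$. The value of unemployment satisfies $U(n)=z+c+\beta\mathrm{E}[\max\{U(n-1),W(w)\}]$ for $n\ge1$ and $U(0)=z+\beta\mathrm{E}[\max\{U(0),W(w)\}]$. The reservation wage $w_R(n)$ is defined by $W(w_R(n))=U(n)$, and it satisfies exactly the equations given in the claim; the optimal policy in state $n$ is to accept any offer $w\ge w_R(n)$. No possibility of extension of benefits is considered here. *)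

From HB Require Import structures.
From mathcomp Require Import all_boot all_order all_algebra.
From mathcomp Require Import all_classical all_reals all_analysis.
Set Implicit Arguments. Unset Strict Implicit. Unset Printing Implicit Defensive.
Import Order.TTheory GRing.Theory Num.Theory.
Import numFieldNormedType.Exports.
Local Open Scope classical_set_scope.
Local Open Scope ring_scope.

Definition cdfP (R : realType) (P : probability R R) (x : R) : R :=
  fine (P [set` `]-oo, x]]).

(* support of P: points all of whose neighbourhoods have positive probability
   (the smallest closed set of full measure) *)
Definition dist_support (R : realType) (P : probability R R) : set R :=
  [set x | forall e : R, 0 < e -> (0 < P (ball x e))%E].

Definition meanP (R : realType) (P : probability R R) : R :=
  fine (\int[P]_w (w%:E)).

Definition UpsilonB (R : realType) (P : probability R R) (a b x : R) : R :=
  fine (\int[P]_(w in [set` `[a, x]]) (x%:E)) + fine (\int[P]_(w in [set` `]x, b]]) (w%:E)).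

Definition UpsilonU (R : realType) (P : probability R R) (a x : R) : R :=
  fine (\int[P]_(w in [set` `[a, x]]) (x%:E)) + fine (\int[P]_(w in [set` `]x, +oo[]) (w%:E)).

Definition wR (R : realType) (Ups : R -> R) (beta z c w0 : R) (n : nat) : R :=
  iter n (fun y => (z + c) * (1 - beta) + beta * Ups y) w0.

From HB Require Import structures.
From mathcomp Require Import all_boot all_order all_algebra.
From mathcomp Require Import all_classical all_reals all_analysis.
From mathcomp Require Import ring lra measurable_realfun.
Set Implicit Arguments. Unset Strict Implicit. Unset Printing Implicit Defensive.
Import Order.TTheory GRing.Theory Num.Theory.
Import numFieldNormedType.Exports.
Local Open Scope classical_set_scope.
Local Open Scope ring_scope.

(* For x <= y, Upsilon(y) - Upsilon(x) lies between (y - x) F(x) and (y - x) F(y), so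
   Upsilon is nondecreasing and 1-Lipschitz on the support, and strictly increasing
   to the right of wlo, where F > 0.  Hence x |-> z(1 - beta) + beta Upsilon(x) is a
   beta-contraction, and Banach's theorem yields the unique w_R(0).  Continuity of F
   forces F(wlo) = 0 and F(whi) = 1, so Upsilon(wlo) = mu_w and Upsilon(whi) = whi;
   these keep w_R(0) and all later w_R(n) strictly inside the support.  Adding c to
   the flow income lifts w_R(1) above w_R(0), and strict monotonicity of Upsilon
   propagates the inequality w_R(n) < w_R(n+1) along the recursion. *)

Section real_facts.
Variable R : realType.

Lemma contraction_exists_unique_fixed_point (D : set R) (f : R -> R) (q : R) :
  closed D -> D !=set0 -> 0 <= q < 1 -> {homo f : x / D x >-> D x} ->
  (forall x y, D x -> D y -> `|f x - f y| <= q * `|x - y|) ->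
  exists! x, D x /\ x = f x.
Proof.
move=> Dcl D0 /andP[q0 q1] fD flip.
pose g : {fun D >-> D} := mkfun_fun fD.
have gc : is_contraction g by exists (NngNum q0); split => // -[x y] [/= Dx Dy]; exact: flip.
have [x Dx xE] := banach_fixed_point gc Dcl D0.
exists x; split => // y [Dy yE].
exact: contraction_fixpoint_unique gc Dx Dy xE yE.
Qed.

Lemma continuous_eq_left_cst (f : R -> R) (a k : R) :
  {for a, continuous f} -> (forall t, t < a -> f t = k) -> f a = k.
Proof.
move=> fa fk; have fak : f x @[x --> a^'-] --> k.
  by apply: cvg_near_cst; near=> t; apply: fk; near: t; exact: nbhs_left_lt.
exact: cvg_unique (cvg_at_left_filter fa) fak.
Unshelve. all: by end_near. Qed.

Lemma continuous_eq_right_cst (f : R -> R) (a k : R) :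
  {for a, continuous f} -> (forall t, a < t -> f t = k) -> f a = k.
Proof.
move=> fa fk; have fak : f x @[x --> a^'+] --> k.
  by apply: cvg_near_cst; near=> t; apply: fk; near: t; exact: nbhs_right_gt.
exact: cvg_unique (cvg_at_right_filter fa) fak.
Unshelve. all: by end_near. Qed.

End real_facts.

Section wage_map.
Variables (R : realType) (U : R -> R) (beta : R).

(* [y] is the flow income while unemployed: [z], or [z + c] while benefits last. *)
Definition wage_map (y x : R) : R := y * (1 - beta) + beta * U x.

Hypothesis beta01 : 0 < beta < 1.

Lemma wage_map_le (y y' x x' : R) : y <= y' -> U x <= U x' -> wage_map y x <= wage_map y' x'.
Proof. by case/andP: beta01 => b0 b1 yy' Uxx'; rewrite /wage_map; nra. Qed.

Lemma wage_map_lipschitz (D : set R) (y : R) :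
  (forall u v, D u -> D v -> u <= v -> 0 <= U v - U u <= v - u) ->
  forall u v, D u -> D v -> `|wage_map y u - wage_map y v| <= beta * `|u - v|.
Proof.
move=> Ulip u v; wlog uv : u v / u <= v => [sym Du Dv|Du Dv].
  by case: (leP u v) => [/sym|/ltW/sym]; last rewrite distrC (distrC u); apply.
have /andP[U0 U1] := Ulip u v Du Dv uv; case/andP: beta01 => b0 b1.
have -> : wage_map y u - wage_map y v = - (beta * (U v - U u)) by rewrite /wage_map; ring.
rewrite normrN distrC !ger0_norm ?subr_ge0 ?mulr_ge0 ?ler_pM2l//; exact: ltW.
Qed.

Lemma exists_unique_fixed_point_wage_map (D : set R) (z : R) :
  closed D -> D !=set0 -> {homo wage_map z : x / D x >-> D x} ->
  (forall u v, D u -> D v -> u <= v -> 0 <= U v - U u <= v - u) ->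
  exists! x, D x /\ x = wage_map z x.
Proof.
move=> Dcl D0 TD Ulip; case/andP: beta01 => b0 b1.
apply: (@contraction_exists_unique_fixed_point _ D _ beta Dcl D0 _ TD).
  by rewrite (ltW b0).
exact: wage_map_lipschitz.
Qed.

Section iterates.
Variables (z c w0 : R) (S : set R).
Hypotheses (Sw0 : S w0) (TS : {homo wage_map (z + c) : x / S x >-> S x}).

Lemma wR_in (n : nat) : S (wR U beta z c w0 n).
Proof. by elim: n => // n; exact: TS. Qed.

Lemma wR_lt_succ : 0 < c -> w0 = wage_map z w0 ->
  (forall x y, S x -> S y -> x < y -> U x < U y) ->
  forall n, wR U beta z c w0 n < wR U beta z c w0 n.+1.
Proof.
move=> c0 w0E Ult; case/andP: beta01 => b0 b1; elim=> [|n IH].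
  by rewrite /= {1}w0E /wage_map; nra.
by rewrite /= /wage_map ltrD2l ltr_pM2l// Ult//; [exact: (wR_in n) | exact: (wR_in n.+1)].
Qed.

End iterates.

Lemma unique_fixed_point_and_wR_increasing (D S : set R) (z c : R) :
  closed D -> D !=set0 -> {homo wage_map z : x / D x >-> D x} ->
  (forall u v, D u -> D v -> u <= v -> 0 <= U v - U u <= v - u) ->
  (forall w0, D w0 -> w0 = wage_map z w0 -> S w0) ->
  {homo wage_map (z + c) : x / S x >-> S x} ->
  (forall u v, S u -> S v -> u < v -> U u < U v) -> 0 < c ->
  (exists! x, D x /\ x = wage_map z x) /\
  (forall w0, D w0 -> w0 = wage_map z w0 ->
   forall n, S (wR U beta z c w0 n) /\ wR U beta z c w0 n < wR U beta z c w0 n.+1).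
Proof.
move=> Dcl D0 TD Ulip DS TS Ult c0; split; first exact: exists_unique_fixed_point_wage_map.
move=> w0 Dw0 w0E n; have Sw0 := DS w0 Dw0 w0E.
by split; [exact: (wR_in Sw0 TS) | exact: (wR_lt_succ Sw0 TS c0 w0E Ult)].
Qed.

End wage_map.

Section cdfP.
Variables (R : realType) (P : probability R R).
Local Notation F := (cdfP P).

(* The identity as a random variable, to reuse the library's limits of [cdf]. *)
Let idR : R -> R := idfun.
#[local] HB.instance Definition _ :=
  @isMeasurableFun.Build _ _ _ _ idR (@measurable_id _ _ setT).

Let cdfPE : F = fine \o cdf (idR : {RV P >-> R}).
Proof. by []. Qed.

Lemma cdfP_ge0 (x : R) : 0 <= F x.
Proof. by rewrite fine_ge0. Qed.

Lemma cdfP_le1 (x : R) : F x <= 1.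
Proof. by rewrite -lee_fin fineK ?fin_num_measure// probability_le1. Qed.

Lemma fine_measure_itvoc (u v : R) : u <= v -> fine (P [set` `]u, v]]) = F v - F u.
Proof.
move=> uv; rewrite /cdfP [in RHS](@itv_bndbnd_setU _ _ _ (BRight u)) ?bnd_simp//.
rewrite measureU//; last first.
  by apply/seteqP; split => x //=; rewrite !in_itv/= => -[h1 /andP[h2 h3]]; lra.
by rewrite fineD ?fin_num_measure//; lra.
Qed.

Lemma cdfP_nondecreasing : {homo F : x y / x <= y}.
Proof.
move=> u v uv; rewrite -subr_ge0 -fine_measure_itvoc//; exact: fine_ge0.
Qed.

Lemma exists_cdfP_lt (y : R) : 0 < y -> exists t, F t < y.
Proof.
move=> y0; have : F t @[t --> -oo] --> 0.
  by rewrite cdfPE; apply/fine_cvg/cvg_cdfNy0.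
by move=> /cvgr_lt/(_ y y0)/filter_ex.
Qed.

Lemma exists_cdfP_gt (y : R) : y < 1 -> exists t, y < F t.
Proof.
move=> y1; have : F t @[t --> +oo] --> (1 : R).
  by rewrite cdfPE; apply/fine_cvg/cvg_cdfy1.
by move=> /cvgr_gt/(_ y y1)/filter_ex.
Qed.

Lemma cdfP_gt0_right_of_support (m x : R) : dist_support P m -> m < x -> 0 < F x.
Proof.
move=> Pm mx; have xm0 : 0 < x - m by rewrite subr_gt0.
rewrite -lte_fin /cdfP fineK ?fin_num_measure//.
apply: (lt_le_trans (Pm _ xm0)); apply: le_measure; rewrite ?inE//.
  by rewrite ball_itv; exact: measurable_itv.
by move=> y; rewrite /ball/= ltr_distlC in_itv/= => /andP[_ h]; lra.
Qed.

Lemma in_support_of_increasing (x : R) :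
  (forall d, 0 < d -> F (x - d) < F (x + d)) -> dist_support P x.
Proof.
move=> Fx e e0; have e2 : 0 < e / 2 by rewrite divr_gt0.
apply: (@lt_le_trans _ _ (P [set` `](x - e / 2), (x + e / 2)]])).
  rewrite -[X in (_ < X)%E]fineK ?fin_num_measure// lte_fin.
  by rewrite fine_measure_itvoc ?subr_gt0 ?Fx//; lra.
apply: le_measure; rewrite ?inE//; first by rewrite ball_itv; exact: measurable_itv.
by move=> y /=; rewrite in_itv/= /ball/= ltr_distlC => /andP[h1 h2]; lra.
Qed.

Lemma has_sup_cdfP_lt (y : R) : 0 < y < 1 -> has_sup [set t | F t < y].
Proof.
move=> /andP[y0 y1]; have [t Ft] := exists_cdfP_lt y0.
have [M FM] := exists_cdfP_gt y1.
split; first by exists t.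
exists M => s /= Fs; rewrite leNgt; apply/negP => /ltW/cdfP_nondecreasing; lra.
Qed.

(* [F] is [< y] just left of the [y]-quantile and [>= y] just right of it. *)
Lemma sup_cdfP_lt_in_support (y : R) : 0 < y < 1 -> dist_support P (sup [set t | F t < y]).
Proof.
move=> /has_sup_cdfP_lt supy; apply: in_support_of_increasing => d d0.
have [t /= Ft dt] := sup_adherent d0 supy.
have Fd : y <= F (sup [set t | F t < y] + d).
  rewrite leNgt; apply/negP => /(sup_upper_bound supy); lra.
by have := cdfP_nondecreasing (ltW dt); lra.
Qed.

Lemma cdfP_eq0_left_of_support (a t : R) :
  (forall x, dist_support P x -> a <= x) -> t < a -> F t = 0.
Proof.
move=> supp ta; apply/eqP; rewrite eq_le cdfP_ge0 andbT leNgt; apply/negP => Ft.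
have Ft1 := cdfP_le1 t; have y01 : 0 < F t / 2 < 1 by apply/andP; split; lra.
have := supp _ (sup_cdfP_lt_in_support y01); apply/negP; rewrite -ltNge.
apply: le_lt_trans ta; apply: ge_sup; first by case: (has_sup_cdfP_lt y01).
move=> s /= Fs; rewrite leNgt; apply/negP => /ltW/cdfP_nondecreasing; lra.
Qed.

Lemma cdfP_eq1_right_of_support (b t : R) :
  (forall x, dist_support P x -> x <= b) -> b < t -> F t = 1.
Proof.
move=> supp bt; apply/eqP; rewrite eq_le cdfP_le1/= leNgt; apply/negP => Ft.
have Ft0 := cdfP_ge0 t; have y01 : 0 < (F t + 1) / 2 < 1 by apply/andP; split; lra.
have := supp _ (sup_cdfP_lt_in_support y01); apply/negP; rewrite -ltNge.
apply: (lt_le_trans bt); apply: sup_upper_bound; first exact: has_sup_cdfP_lt.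
rewrite /=; lra.
Qed.

Lemma cdfP_left_end (a : R) :
  continuous F -> (forall x, dist_support P x -> a <= x) -> F a = 0.
Proof.
move=> Fc supp; apply: continuous_eq_left_cst (Fc a) _ => t.
exact: cdfP_eq0_left_of_support.
Qed.

Lemma cdfP_right_end (b : R) :
  continuous F -> (forall x, dist_support P x -> x <= b) -> F b = 1.
Proof.
move=> Fc supp; apply: continuous_eq_right_cst (Fc b) _ => t.
exact: cdfP_eq1_right_of_support.
Qed.

Lemma measure_lray_null (a : R) : F a = 0 -> P [set` `]-oo, a]] = 0%E.
Proof. by move=> Fa; rewrite -[LHS]fineK ?fin_num_measure// -/(cdfP P a) Fa. Qed.

Lemma measure_itvoc_compl_null (a b : R) : a <= b -> F a = 0 -> F b = 1 ->
  P (~` [set` `]a, b]]) = 0%E.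
Proof.
move=> ab Fa Fb; rewrite probability_setC// -[P _]fineK ?fin_num_measure//.
by rewrite fine_measure_itvoc// Fa Fb subr0 subee.
Qed.

End cdfP.

Lemma integral_setC_null (R : realType) d (T : measurableType d)
    (mu : {measure set T -> \bar R}) (D : set T) (f : T -> \bar R) :
  measurable D -> measurable_fun setT f -> mu (~` D) = 0%E ->
  (\int[mu]_x f x = \int[mu]_(x in D) f x)%E.
Proof.
move=> mD mf muD; rewrite -(setUv D) integral_setU//; last 3 first.
- exact: measurableC.
- by rewrite setUv.
- by apply/disj_setPS => x [].
rewrite [X in (_ + X)%E]null_set_integral ?adde0//; first exact: measurableC.
exact: measurable_funS mf.
Qed.

Section upsilon.
Variables (R : realType) (P : probability R R).
Local Notation F := (cdfP P).

(* Common form of [UpsilonB P a b] ([t = BRight b]) and [UpsilonU P a] ([t = +oo]). *)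
Definition Upsilon (a : R) (t : itv_bound R) (x : R) : R :=
  fine (\int[P]_(w in [set` `[a, x]]) x%:E) +
  fine (\int[P]_(w in [set` Interval (BRight x) t]) w%:E).

Lemma fine_integral_cst (D : set R) (k : R) : measurable D ->
  fine (\int[P]_(w in D) k%:E) = k * fine (P D).
Proof.
by move=> mD; rewrite (integral_cst P mD k%:E) fineM// fin_num_measure.
Qed.

Lemma fine_measure_itvcc (a x : R) : F a = 0 -> a <= x -> fine (P [set` `[a, x]]) = F x.
Proof.
move=> Fa ax; apply/eqP; rewrite eq_le; apply/andP; split.
  rewrite fine_le ?fin_num_measure//; apply: le_measure; rewrite ?inE//.
  by move=> w /=; rewrite !in_itv/= => /andP[].
rewrite -[F x]subr0 -Fa -fine_measure_itvoc// fine_le ?fin_num_measure//.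
by apply: le_measure; rewrite ?inE// => w /=; rewrite !in_itv/= => /andP[/ltW-> ->].
Qed.

Lemma integrable_id_itvoc (x y : R) : P.-integrable [set` `]x, y]] EFin.
Proof.
apply: (@measurable_bounded_integrable _ _ _ P idfun) => //.
- by apply: (le_lt_trans (probability_le1 P _)); rewrite ?ltry.
- exact: measurable_id.
exists (`|x| + `|y|); split; first by rewrite realE addr_ge0.
move=> M HM w /=; rewrite in_itv/= => /andP[h1 h2].
have := ler_norm x; have := ler_norm (- x); have := ler_norm y; have := ler_norm (- y).
rewrite !normrN => *; rewrite ler_norml; apply/andP; split; lra.
Qed.

Lemma integral_itvoc_id_bounds (x y : R) : x <= y ->
  x * (F y - F x) <= fine (\int[P]_(w in [set` `]x, y]]) w%:E) <= y * (F y - F x).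
Proof.
move=> xy; have mD : measurable [set` `]x, y]] by [].
have intD := integrable_id_itvoc x y.
rewrite -!fine_measure_itvoc// -!fine_integral_cst//.
apply/andP; split; rewrite fine_le ?(integrable_fin_num mD)//;
  try exact: finite_measure_integrable_cst.
- apply: le_integral => //; first exact: finite_measure_integrable_cst.
  by move=> w; rewrite inE/= in_itv/= lee_fin => /andP[/ltW].
- apply: le_integral => //; first exact: finite_measure_integrable_cst.
  by move=> w; rewrite inE/= in_itv/= lee_fin => /andP[].
Qed.

Lemma fine_integral_itv_split (x y : R) (t : itv_bound R) : x <= y -> (BRight y <= t)%O ->
  P.-integrable [set` Interval (BRight x) t] EFin ->
  fine (\int[P]_(w in [set` Interval (BRight x) t]) w%:E) =
  fine (\int[P]_(w in [set` `]x, y]]) w%:E) +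
  fine (\int[P]_(w in [set` Interval (BRight y) t]) w%:E).
Proof.
move=> xy yt xint.
rewrite (@itv_bndbnd_setU _ _ (BRight x) (BRight y) t) ?bnd_simp//.
have yint : P.-integrable [set` Interval (BRight y) t] EFin.
  by apply: integrableS xint => //; apply: subset_itvr; rewrite bnd_simp.
rewrite integral_setU//; last first.
  apply/disj_setPS => w [/=]; rewrite in_itv/= itv_boundlr => /andP[_ wy].
  by rewrite bnd_simp => /andP[yw _]; lra.
by rewrite fineD// integrable_fin_num//; exact: integrable_id_itvoc.
Qed.

Variables (a : R) (t : itv_bound R).
Hypotheses (Fa : F a = 0) (aint : P.-integrable [set` Interval (BRight a) t] EFin).

Lemma Upsilon_increment (x y : R) : a <= x -> x <= y -> (BRight y <= t)%O ->
  (y - x) * F x <= Upsilon a t y - Upsilon a t x <= (y - x) * F y.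
Proof.
move=> ax xy yt; have xint : P.-integrable [set` Interval (BRight x) t] EFin.
  by apply: integrableS aint => //; apply: subset_itvr; rewrite bnd_simp.
have /andP[lo hi] := integral_itvoc_id_bounds xy.
rewrite /Upsilon (fine_integral_itv_split xy yt xint) !fine_integral_cst//.
rewrite !fine_measure_itvcc//; last exact: le_trans xy.
apply/andP; split; nra.
Qed.

Lemma Upsilon_lipschitz (x y : R) :
  x \in Interval (BLeft a) t -> y \in Interval (BLeft a) t -> x <= y ->
  0 <= Upsilon a t y - Upsilon a t x <= y - x.
Proof.
rewrite !itv_boundlr !bnd_simp => /andP[ax _] /andP[_ yt] xy.
have /andP[lo hi] := Upsilon_increment ax xy yt.
have := cdfP_ge0 P x; have := cdfP_le1 P y => Fy1 Fx0.
apply/andP; split; nra.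
Qed.

Lemma Upsilon_ge_left_end (x : R) :
  x \in Interval (BLeft a) t -> Upsilon a t a <= Upsilon a t x.
Proof.
move=> Dx; have ax : a <= x by move: Dx; rewrite itv_boundlr bnd_simp => /andP[].
have Da : a \in Interval (BLeft a) t.
  by move: Dx; rewrite !itv_boundlr lexx => /andP[_]; apply: le_trans; rewrite bnd_simp.
by have /andP[+ _] := Upsilon_lipschitz Da Dx ax; rewrite subr_ge0.
Qed.

Lemma Upsilon_lt (x y : R) : dist_support P a -> a < x -> x < y ->
  y \in Interval (BLeft a) t -> Upsilon a t x < Upsilon a t y.
Proof.
rewrite itv_boundlr bnd_simp => Pa ax xy /andP[_ yt].
have /andP[lo _] := Upsilon_increment (ltW ax) (ltW xy) yt.
have := cdfP_gt0_right_of_support Pa ax; nra.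
Qed.

Lemma Upsilon_left_end : P (~` [set` Interval (BRight a) t]) = 0%E ->
  Upsilon a t a = meanP P.
Proof.
move=> Pout; rewrite /Upsilon fine_integral_cst// fine_measure_itvcc// Fa mulr0 add0r.
by rewrite /meanP (integral_setC_null _ _ Pout)//; exact/measurable_EFinP.
Qed.

End upsilon.

Lemma Upsilon_right_end (R : realType) (P : probability R R) (a b : R) :
  a <= b -> cdfP P a = 0 -> cdfP P b = 1 -> Upsilon P a (BRight b) b = b.
Proof.
move=> ab Fa Fb; rewrite /Upsilon fine_integral_cst// fine_measure_itvcc// Fb mulr1.
by rewrite set_itvxx integral_set0 addr0.
Qed.


Section reservation_wages.
Variables (R : realType) (P : probability R R) (beta z c : R).
Hypothesis beta01 : 0 < beta < 1.

Lemma wage_map_Upsilon_gt (a : R) (t : itv_bound R) (y x : R) :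
  cdfP P a = 0 -> P.-integrable [set` Interval (BRight a) t] EFin ->
  P (~` [set` Interval (BRight a) t]) = 0%E ->
  a < (1 - beta) * z + beta * meanP P -> z <= y ->
  x \in Interval (BLeft a) t -> a < wage_map (Upsilon P a t) beta y x.
Proof.
move=> Fa aint Pout amu zy Dx.
apply: (@lt_le_trans _ _ (wage_map (Upsilon P a t) beta z a)).
  by rewrite /wage_map Upsilon_left_end//; lra.
by apply: wage_map_le => //; exact: Upsilon_ge_left_end.
Qed.

Lemma wage_map_Upsilon_lt (a b y x : R) :
  a <= b -> cdfP P a = 0 -> cdfP P b = 1 -> y < b -> x \in `[a, b] ->
  wage_map (Upsilon P a (BRight b)) beta y x < b.
Proof.
move=> ab Fa Fb yb Dx; case/andP: beta01 => b0 b1.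
have Db : b \in `[a, b] by rewrite in_itv/= lexx ab.
have xb : x <= b by move: Dx; rewrite in_itv/= => /andP[].
apply: (@le_lt_trans _ _ (wage_map (Upsilon P a (BRight b)) beta y b)).
  apply: wage_map_le => //.
  have /andP[+ _] := Upsilon_lipschitz Fa (integrable_id_itvoc P a b) Dx Db xb.
  by rewrite subr_ge0.
by rewrite /wage_map (Upsilon_right_end ab Fa Fb); nra.
Qed.

Lemma reservation_wages_bounded (a b : R) :
  0 < c -> continuous (cdfP P) -> a <= b -> dist_support P = [set` `[a, b]] ->
  a < (1 - beta) * z + beta * meanP P -> z + c < b ->
  (exists! x : R, a <= x <= b /\ x = wage_map (UpsilonB P a b) beta z x) /\
  (forall w0, a <= w0 <= b -> w0 = wage_map (UpsilonB P a b) beta z w0 ->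
   forall n, a < wR (UpsilonB P a b) beta z c w0 n < b /\
             wR (UpsilonB P a b) beta z c w0 n < wR (UpsilonB P a b) beta z c w0 n.+1).
Proof.
move=> c0 Fc ab suppE amu zcb; have zb : z < b by lra.
have supp_ab x : dist_support P x -> a <= x <= b by rewrite suppE/= in_itv.
have Fa : cdfP P a = 0 by apply: cdfP_left_end Fc _ => x /supp_ab/andP[].
have Fb : cdfP P b = 1 by apply: cdfP_right_end Fc _ => x /supp_ab/andP[].
have Pa : dist_support P a by rewrite suppE/= in_itv/= lexx ab.
have aint := integrable_id_itvoc P a b.
have Tgt := wage_map_Upsilon_gt Fa aint (measure_itvoc_compl_null ab Fa Fb) amu.
have Tlt := wage_map_Upsilon_lt ab Fa Fb.
have -> : UpsilonB P a b = Upsilon P a (BRight b) by [].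
apply: (unique_fixed_point_and_wR_increasing (D := `[a, b]) (S := `]a, b[) beta01) => //.
- exact: itv_closed.
- by exists a; rewrite /= in_itv/= lexx ab.
- by move=> x Dx; rewrite /= in_itv/= !ltW ?Tgt ?Tlt.
- exact: Upsilon_lipschitz.
- by move=> w0 Dw0 ->; rewrite /= in_itv/= Tgt ?Tlt.
- move=> x; rewrite /= !in_itv/= => /andP[ax xb].
  by rewrite Tgt ?Tlt ?in_itv/= ?ltW//; lra.
- move=> x y; rewrite /= !in_itv/= => /andP[ax _] /andP[_ yb] xy.
  by apply: Upsilon_lt => //; rewrite in_itv/= !ltW// (lt_trans ax xy).
Qed.

Lemma reservation_wages_unbounded (a : R) :
  0 < c -> continuous (cdfP P) -> dist_support P = [set` `[a, +oo[] ->
  P.-integrable setT EFin -> a < (1 - beta) * z + beta * meanP P ->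
  (exists! x : R, a <= x /\ x = wage_map (UpsilonU P a) beta z x) /\
  (forall w0, a <= w0 -> w0 = wage_map (UpsilonU P a) beta z w0 ->
   forall n, a < wR (UpsilonU P a) beta z c w0 n /\
             wR (UpsilonU P a) beta z c w0 n < wR (UpsilonU P a) beta z c w0 n.+1).
Proof.
move=> c0 Fc suppE Pint amu; have zc : z <= z + c by lra.
have Fa : cdfP P a = 0 by apply: cdfP_left_end Fc _ => x; rewrite suppE/= in_itv/= andbT.
have Pa : dist_support P a by rewrite suppE/= in_itv/= lexx.
have aint : P.-integrable [set` `]a, +oo[] EFin by exact: integrableS Pint.
have Pout : P (~` [set` `]a, +oo[]) = 0%E by rewrite setCitvr; exact: measure_lray_null.
have Tgt := wage_map_Upsilon_gt Fa aint Pout amu.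
have -> : UpsilonU P a = Upsilon P a +oo%O by [].
apply: (unique_fixed_point_and_wR_increasing
  (D := [set x | a <= x]) (S := [set x | a < x]) beta01).
- exact: closed_ge.
- by exists a => /=.
- by move=> x ax; apply/ltW/Tgt => //; rewrite in_itv/= andbT.
- by move=> u v au av; apply: Upsilon_lipschitz; rewrite ?in_itv/= ?andbT.
- by move=> w0 aw0 ->; rewrite /= Tgt ?in_itv/= ?andbT.
- by move=> x ax; apply: Tgt => //; rewrite in_itv/= andbT ltW.
- move=> u v au _ uv.
  by apply: Upsilon_lt => //; rewrite in_itv/= andbT ltW// (lt_trans au uv).
- exact: c0.
Qed.

End reservation_wages.

Theorem proposition1 :
  (forall (R : realType) (beta z c : R) (N : nat) (P : probability R R)
          (wlo whi : R),
    0 < beta < 1 -> 0 < z -> 0 < c -> (0 < N)%N ->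
    wlo < whi ->
    continuous (cdfP P) ->
    dist_support P = [set` `[wlo, whi]] ->
    wlo < (1 - beta) * z + beta * meanP P ->
    z + c < whi ->
    (exists! x : R, wlo <= x <= whi /\
                    x = z * (1 - beta) + beta * UpsilonB P wlo whi x) /\
    (forall w0 : R, wlo <= w0 <= whi ->
       w0 = z * (1 - beta) + beta * UpsilonB P wlo whi w0 ->
       wlo < wR (UpsilonB P wlo whi) beta z c w0 0 /\
       (forall n : nat, (n < N)%N ->
          wR (UpsilonB P wlo whi) beta z c w0 n <
          wR (UpsilonB P wlo whi) beta z c w0 n.+1) /\
       wR (UpsilonB P wlo whi) beta z c w0 N < whi)) /\
  (forall (R : realType) (beta z c : R) (N : nat) (P : probability R R)
          (wlo : R),
    0 < beta < 1 -> 0 < z -> 0 < c -> (0 < N)%N ->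
    continuous (cdfP P) ->
    dist_support P = [set` `[wlo, +oo[] ->
    P.-integrable setT (fun w : R => w%:E) ->
    wlo < (1 - beta) * z + beta * meanP P ->
    (exists! x : R, wlo <= x /\
                    x = z * (1 - beta) + beta * UpsilonU P wlo x) /\
    (forall w0 : R, wlo <= w0 ->
       w0 = z * (1 - beta) + beta * UpsilonU P wlo w0 ->
       wlo < wR (UpsilonU P wlo) beta z c w0 0 /\
       (forall n : nat, (n < N)%N ->
          wR (UpsilonU P wlo) beta z c w0 n <
          wR (UpsilonU P wlo) beta z c w0 n.+1))).
Proof.
split.
- move=> R beta z c N P a b beta01 _ c0 _ ab Fc suppE amu zcb.
  have [ex wages] := reservation_wages_bounded beta01 c0 Fc (ltW ab) suppE amu zcb.
  split=> // w0 Dw0 w0E; have {}wages := wages w0 Dw0 w0E.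
  split; first by case: (wages 0%N) => /andP[].
  by split=> [n _|]; [case: (wages n) | case: (wages N) => /andP[]].
- move=> R beta z c N P a beta01 _ c0 _ Fc suppE Pint amu.
  have [ex wages] := reservation_wages_unbounded beta01 c0 Fc suppE Pint amu.
  split=> // w0 Dw0 w0E; have {}wages := wages w0 Dw0 w0E.
  by split=> [|n _]; [case: (wages 0%N) | case: (wages n)].
Qed.
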